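(* For the iterates of SONATA with step-size $\alpha\in(0,1]$ under Assumptions (A), (B), (C), (W), for every $\nu\ge0$: $$\|\delta^\nu\|^2\le4L_{\max}^2\|x_\perp^\nu\|^2+2\|y_\perp^\nu\|^2.$$
   Context: Problem (P): minimize $U=F+G$ over $\mathcal K$, $F=\frac1m\sum_{i=1}^mf_i$. (A): $\mathcal K\subseteq\mathbb R^d$ nonempty closed convex; $f_i$ twice differentiable convex on open $\mathcal O\supseteq\mathcal K$; $\mu I\preceq\nabla^2F\preceq LI$ on $\mathcal K$ ($\mu>0$); $G$ convex on $\mathcal K$. $\nabla^2f_i\preceq L_iI$ on $\mathcal K$, $L_{\max}=\max_iL_i$. (B): connected undirected graph on $\{1,\dots,m\}$, edges $\mathcal E$. (W): $w_{ii}>0$; for $i\ne j$, $w_{ij}>0$ iff $(i,j)\in\mathcal E$, else 0; $W$ doubly stochastic. (C): $\tilde f_i:\mathcal O\times\mathcal O\to\mathbb R$ $C^2$, $\nabla\tilde f_i(x;x)=\nabla f_i(x)$, $\nabla\tilde f_i(\cdot;x)$ Lipschitz, $\tilde f_i(\cdot;x)$ strongly convex on $\mathcal K$ for $x\in\mathcal K$. SONATA: $x_i^0\in\mathcal K$, $y_i^0=\nabla f_i(x_i^0)$; $\hat x_i^\nu=\arg\min_{x_i\in\mathcal K}\tilde f_i(x_i;x_i^\nu)+(y_i^\nu-\nabla f_i(x_i^\nu))^\top(x_i-x_i^\nu)+G(x_i)$; $x_i^{\nu+1/2}=x_i^\nu+\alpha(\hat x_i^\nu-x_i^\nu)$; $x_i^{\nu+1}=\sum_jw_{ij}x_j^{\nu+1/2}$;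 $y_i^{\nu+1}=\sum_jw_{ij}(y_j^\nu+\nabla f_j(x_j^{\nu+1})-\nabla f_j(x_j^\nu))$. $\delta^\nu$ stacks $\delta_i^\nu=\nabla F(x_i^\nu)-y_i^\nu$; $x_\perp^\nu=x^\nu-\mathbf1_m\otimes\frac1m\sum_ix_i^\nu$, $y_\perp^\nu=y^\nu-\mathbf1_m\otimes\frac1m\sum_iy_i^\nu$, with $x^\nu,y^\nu$ stacking the local vectors. *)

(* Vectors of R^d are row vectors 'rV[R]_d (a normed module in the library);
   the Euclidean inner product and squared Euclidean norm are written out
   explicitly below (the library's norm on matrices is the sup norm). *)
From HB Require Import structures.
From mathcomp Require Import all_boot all_order all_algebra.
From mathcomp Require Import all_classical all_reals all_analysis.
Set Implicit Arguments. Unset Strict Implicit. Unset Printing Implicit Defensive.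
Import Order.TTheory GRing.Theory Num.Theory.
Import numFieldNormedType.Exports.
Local Open Scope classical_set_scope.
Local Open Scope ring_scope.

Section Defs.
Context {R : realType} {d : nat}.
Notation V := 'rV[R]_d.

Definition dotv (u v : V) : R := \sum_(k < d) u ord0 k * v ord0 k.
Definition sqn (u : V) : R := dotv u u.

Definition convex_in (S : set V) : Prop :=
  forall x y (t : R), S x -> S y -> 0 <= t <= 1 -> S ((1 - t) *: x + t *: y).

Definition convex_fun_on (S : set V) (f : V -> R) : Prop :=
  forall x y (t : R), S x -> S y -> 0 <= t <= 1 -> S ((1 - t) *: x + t *: y) ->
    f ((1 - t) *: x + t *: y) <= (1 - t) * f x + t * f y.

Definition strongly_convex_on (S : set V) (f : V -> R) : Prop :=
  exists tau : R, 0 < tau /\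
  forall x y (t : R), S x -> S y -> 0 <= t <= 1 ->
    f ((1 - t) *: x + t *: y) <=
      (1 - t) * f x + t * f y - tau / 2 * (t * (1 - t)) * sqn (x - y).

Definition is_gradient_on (S : set V) (f : V -> R) (g : V -> V) : Prop :=
  forall x, S x -> differentiable f x /\ forall h, 'd f x h = dotv (g x) h.

Definition euclid_lipschitz_on (S : set V) (g : V -> V) : Prop :=
  exists c : R, forall u v, S u -> S v -> sqn (g u - g v) <= c ^+ 2 * sqn (u - v).

Definition C2_on {U : normedModType R} (S : set U) (f : U -> R) : Prop :=
  forall u v : U,
    (forall p, S p -> derivable f p u) /\
    (forall p, S p -> derivable (fun q => 'D_u f q) p v) /\
    (forall p, S p -> {for p, continuous (fun q => 'D_v (fun r => 'D_u f r) q)}).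

Definition avgv (m : nat) (z : 'I_m -> V) : V := (m%:R)^-1 *: \sum_(i < m) z i.
Definition sqn_perp (m : nat) (z : 'I_m -> V) : R :=
  \sum_(i < m) sqn (z i - avgv z).

Definition gradF (m : nat) (gf : 'I_m -> V -> V) (x : V) : V :=
  (m%:R)^-1 *: \sum_(i < m) gf i x.

End Defs.

From HB Require Import structures.
From mathcomp Require Import all_boot all_order all_algebra.
From mathcomp Require Import all_classical all_reals all_analysis.
From mathcomp Require Import ring lra.
Import Order.TTheory GRing.Theory Num.Theory.
Import numFieldNormedType.Exports.
Local Open Scope classical_set_scope.
Local Open Scope ring_scope.

Set Implicit Arguments.
Unset Strict Implicit.

(* Gradient tracking makes the average of the y_i equal to the average of the
   local gradients at the current iterates (W is column stochastic and
   y^0 = grad f(x^0)), so, with ybar that average,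
     grad F(x_i) - y_i = (1/m) sum_j (grad f_j(x_i) - grad f_j(x_j)) + (ybar - y_i).
   The iterates stay in K, where each grad f_j is L_max-Lipschitz; Jensen and
   sum_{i,j} |x_i - x_j|^2 = 2m |x_perp|^2 bound the first terms by
   2 L_max^2 |x_perp|^2, and |a + b|^2 <= 2|a|^2 + 2|b|^2 concludes.
   The Lipschitz bound comes from the Hessian H of f_j: second differences of
   f_j show that H is symmetric and, f_j being convex, positive semidefinite;
   with H <= L_j I, Cauchy-Schwarz for the form of H and the mean value theorem
   along [b, a] give |grad f_j(a) - grad f_j(b)| <= L_j |a - b|. *)

Section InnerProduct.
Context {R : realType} {d : nat}.
Notation V := 'rV[R]_d.
Implicit Types u v w : V.

Lemma dotvC u v : dotv u v = dotv v u.
Proof. by apply: eq_bigr => k _; rewrite mulrC. Qed.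

Lemma dotvDl u v w : dotv (u + v) w = dotv u w + dotv v w.
Proof. by rewrite /dotv -big_split; apply: eq_bigr => k _; rewrite mxE mulrDl. Qed.

Lemma dotvZl (a : R) u v : dotv (a *: u) v = a * dotv u v.
Proof. by rewrite /dotv mulr_sumr; apply: eq_bigr => k _; rewrite mxE mulrA. Qed.

Lemma dotvBl u v w : dotv (u - v) w = dotv u w - dotv v w.
Proof. by rewrite dotvDl -scaleN1r dotvZl mulN1r. Qed.

Lemma dotvDr u v w : dotv w (u + v) = dotv w u + dotv w v.
Proof. by rewrite dotvC dotvDl !(dotvC w). Qed.

Lemma dotvZr (a : R) u v : dotv u (a *: v) = a * dotv u v.
Proof. by rewrite dotvC dotvZl dotvC. Qed.

Lemma sqnE u : sqn u = \sum_(k < d) u ord0 k ^+ 2.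
Proof. by apply: eq_bigr => k _; rewrite expr2. Qed.

Lemma sqn_ge0 u : 0 <= sqn u.
Proof. by rewrite sqnE sumr_ge0 // => k _; rewrite sqr_ge0. Qed.

Lemma sqnN u : sqn (- u) = sqn u.
Proof. by rewrite !sqnE; apply: eq_bigr => k _; rewrite mxE sqrrN. Qed.

Lemma sqnD_le u v : sqn (u + v) <= 2 * sqn u + 2 * sqn v.
Proof.
rewrite !sqnE !mulr_sumr -big_split /=; apply: ler_sum => k _; rewrite mxE.
have := sqr_ge0 (u ord0 k - v ord0 k); rewrite !expr2; nra.
Qed.

Lemma normr_coord_le u k : `|u ord0 k| <= `|u|.
Proof.
have -> : `|u| = mx_norm u by [].
by rewrite mx_normrE (bigD1 (ord0, k)) //= le_max lexx.
Qed.

Lemma normr_dotv_le u v : `|dotv u v| <= d%:R * (`|u| * `|v|).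
Proof.
rewrite (le_trans (ler_norm_sum _ _ _)) //.
have -> : d%:R * (`|u| * `|v|) = \sum_(k < d) `|u| * `|v|.
  by rewrite sumr_const card_ord mulr_natl.
by apply: ler_sum => k _; rewrite normrM ler_pM // normr_coord_le.
Qed.

End InnerProduct.

Lemma exists_pos_lt_both (R : realFieldType) (a b : R) : 0 < a -> 0 < b ->
  exists2 t, 0 < t & t < a /\ t < b.
Proof.
move=> a0 b0; have m0 : 0 < Num.min a b by rewrite lt_min a0 b0.
exists (Num.min a b / 2); first by rewrite divr_gt0.
have lt_m : Num.min a b / 2 < Num.min a b by rewrite ltr_pdivrMr // ltr_pMr // ltr1n.
by split; apply: (lt_le_trans lt_m); rewrite ge_min lexx ?orbT.
Qed.

Lemma MVT_segment_derive (R : realType) (phi dphi : R -> R) (a b : R) : a <= b ->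
  (forall s, a <= s <= b -> is_derive s 1 phi (dphi s)) ->
  exists2 c, a <= c <= b & phi b - phi a = dphi c * (b - a).
Proof.
move=> ab hd.
have hd_open s : s \in `]a, b[ -> is_derive s 1 phi (dphi s).
  by rewrite in_itv /= => /andP[sa sb]; apply: hd; rewrite !ltW.
have phi_cont : {within `[a, b], continuous phi}.
  apply: derivable_within_continuous => s; rewrite in_itv /= => /hd hs.
  exact: (@ex_derive _ _ _ _ _ _ _ hs).
by have [c] := MVT_segment ab hd_open phi_cont; rewrite in_itv /=; exists c.
Qed.

Section LineDerivatives.
Context {R : realType} {d : nat}.
Notation V := 'rV[R]_d.

Lemma is_derive_line (W : normedModType R) (g : V -> W) (p u : V) (s : R) :
  differentiable g (p + s *: u) ->
  is_derive s 1 (fun t : R => g (p + t *: u)) ('d g (p + s *: u) u).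
Proof.
move=> dg.
have hl : is_diff s (fun t : R => p + t *: u) (fun t : R => t *: u).
  have := is_diffD (is_diff_cst p s) (is_diff_scalel s u).
  have -> : cst p + ( *:%R ^~ u) = (fun t : R => p + t *: u) by [].
  by have -> : (0 : R -> V) + ( *:%R ^~ u) = (fun t : R => t *: u)
    by apply/funext => t /=; rewrite add0r.
have hc := is_diff_comp hl (differentiableP dg).
split; first exact/diff_derivable/(@ex_diff _ _ _ _ _ _ _ hc).
by rewrite (deriveE _ (@ex_diff _ _ _ _ _ _ _ hc)) diff_val /= scale1r.
Qed.

Lemma is_derive_dotv (G : R -> V) (D w : V) (s : R) :
  is_derive s 1 G D -> is_derive s 1 (fun t => dotv (G t) w) (dotv D w).
Proof.
move=> hG.
have hd : derivable G s 1 := @ex_derive _ _ _ _ _ _ _ hG.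
have hk k : is_derive s 1 (fun t => G t ord0 k) (D ord0 k).
  split; first exact: (proj1 (@derivable_mxP R R^o 1 d G s 1) hd).
  by have := derive_mx hd; rewrite (@derive_val _ _ _ _ _ _ _ hG) => ->; rewrite mxE.
have -> : (fun t => dotv (G t) w) = \sum_(k < d) (w ord0 k \*: (fun t => G t ord0 k)).
  by rewrite fct_sumE; apply/funext => t; apply: eq_bigr => k _; rewrite /= mulrC.
have -> : dotv D w = \sum_(k < d) w ord0 k *: D ord0 k.
  by apply: eq_bigr => k _; rewrite mulrC.
by apply: is_derive_sum => k; apply: is_deriveZ.
Qed.

Lemma differentiable_remainder_le (W : normedModType R) (g : V -> W) x e :
  differentiable g x -> 0 < e -> exists2 r, 0 < r &
  forall h, `|h| < r -> `|g (x + h) - g x - 'd g x h| <= e * `|h|.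
Proof.
move=> dg e0; have /eqaddoP := diff_locally dg.
move=> /(_ e e0) /nbhs_norm0P [r r0 Hr]; exists r => // h /Hr /=.
by rewrite [x + h]addrC opprD addrA.
Qed.

Lemma open_norm_ball (O : set V) x : open O -> O x ->
  exists2 r, 0 < r & forall h, `|h| < r -> O (x + h).
Proof.
move=> oO Ox; have : nbhs x O by apply: open_nbhs_nbhs.
by move=> /nbhs_normP [r r0 Hr]; exists r => // h hr; apply: Hr; rewrite /= opprD addNKr normrN.
Qed.

End LineDerivatives.

Lemma exists_pos_mul_le (R : realFieldType) (c e : R) : 0 <= c -> 0 < e ->
  exists2 k, 0 < k & c * k <= e.
Proof.
move=> c0 e0; exists (e / (c + 1)); first by rewrite divr_gt0 ?ltr_wpDl.
by rewrite mulrA ler_pdivrMr ?ltr_wpDl //; nra.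
Qed.

Lemma normr_segment_le (R : numFieldType) (V : normedModType R) (u v : V) (s t : R) :
  0 <= s <= t ->
  `|t *: v + s *: u| <= t * (`|u| + `|v|) /\ `|s *: u| <= t * (`|u| + `|v|).
Proof.
move=> /andP[s0 st]; have t0 := le_trans s0 st.
have su : `|s *: u| <= t * `|u| by rewrite normrZ ger0_norm //; exact: ler_wpM2r.
split; last by rewrite (le_trans su) // ler_wpM2l // lerDl.
apply: le_trans (ler_normD _ _) _.
by rewrite normrZ ger0_norm // mulrDr [leRHS]addrC lerD.
Qed.

Section SecondDifference.
Context {R : realType} {d : nat}.
Notation V := 'rV[R]_d.

Definition second_difference (f : V -> R) (x u v : V) (t : R) :=
  f (x + t *: v + t *: u) - f (x + t *: u) - f (x + t *: v) + f x.

Lemma second_differenceC f x u v t :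
  second_difference f x u v t = second_difference f x v u t.
Proof. by rewrite /second_difference (addrAC x); ring. Qed.

Lemma second_difference_mvt (f : V -> R) (g : V -> V) (O : set V) x u v t :
  is_gradient_on O f g -> 0 <= t ->
  (forall s, 0 <= s <= t -> O (x + t *: v + s *: u) /\ O (x + s *: u)) ->
  exists2 c, 0 <= c <= t & second_difference f x u v t =
    t * dotv (g (x + t *: v + c *: u) - g (x + c *: u)) u.
Proof.
move=> hg t0 hO.
pose phi := (fun s : R => f (x + t *: v + s *: u)) - (fun s => f (x + s *: u)).
pose dphi := fun s => dotv (g (x + t *: v + s *: u) - g (x + s *: u)) u.
have hd : forall s, 0 <= s <= t -> is_derive s 1 phi (dphi s).
  move=> s /hO [hv hu]; rewrite /dphi dotvBl.
  have [df1 <-] := hg _ hv; have [df2 <-] := hg _ hu.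
  exact: is_deriveB (@is_derive_line _ _ R^o _ _ _ _ df1) (@is_derive_line _ _ R^o _ _ _ _ df2).
have [c ct Hc] := MVT_segment_derive t0 hd.
exists c => //; move: Hc; rewrite /phi !fctE scale0r !addr0 subr0 mulrC => <-.
by rewrite /second_difference; ring.
Qed.

Lemma normr_dotv_remainder_le (g : V -> V) (H : {linear V -> V}) x w1 w2 u eps :
  `|g (x + w1) - g x - H w1| <= eps -> `|g (x + w2) - g x - H w2| <= eps ->
  `|dotv (g (x + w1) - g (x + w2) - H (w1 - w2)) u| <= 2 * d%:R * eps * `|u|.
Proof.
move=> h1 h2.
have -> : g (x + w1) - g (x + w2) - H (w1 - w2) =
    (g (x + w1) - g x - H w1) - (g (x + w2) - g x - H w2).
  by rewrite linearB; apply/rowP => k; rewrite !mxE; ring.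
apply: le_trans (normr_dotv_le _ _) _.
have -> : 2 * d%:R * eps * `|u| = d%:R * ((eps + eps) * `|u|) by ring.
apply: ler_wpM2l => //; apply: ler_wpM2r => //.
exact: le_trans (ler_normB _ _) (lerD h1 h2).
Qed.

Lemma second_difference_approx (f : V -> R) (g : V -> V) (O : set V) x u v e :
  open O -> is_gradient_on O f g -> O x -> differentiable g x -> 0 < e ->
  exists2 T, 0 < T & forall t, 0 < t -> t < T ->
    `|second_difference f x u v t - t ^+ 2 * dotv ('d g x v) u| <= e * t ^+ 2.
Proof.
move=> oO hg Ox dg e0.
pose N := `|u| + `|v|.
have N0 : 0 <= N by rewrite addr_ge0.
have c0 : 0 <= 2 * d%:R * N ^+ 2 := mulr_ge0 (mulr_ge0 (ler0n R 2) (ler0n R d)) (sqr_ge0 N).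
have [e' e'0 e'N] := exists_pos_mul_le c0 e0.
have [r r0 Or] := open_norm_ball oO Ox.
have [del del0 Hdel] := differentiable_remainder_le dg e'0.
exists (Num.min r del / (N + 1)); first by rewrite divr_gt0 ?lt_min ?r0 ?del0 ?ltr_wpDl.
move=> t t0 tT.
have tN1 : t * (N + 1) < Num.min r del by rewrite -ltr_pdivlMr // ltr_wpDl.
have tN : t * N < Num.min r del.
  by apply: le_lt_trans _ tN1; rewrite ler_pM2l // lerDl.
have [tN_r tN_del] : t * N < r /\ t * N < del by move: tN; rewrite lt_min => /andP.
have hO s : 0 <= s <= t -> O (x + t *: v + s *: u) /\ O (x + s *: u).
  move=> /(normr_segment_le u v) [h1 h2]; split; [rewrite -addrA|]; apply: Or.
    exact: le_lt_trans h1 tN_r.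
  exact: le_lt_trans h2 tN_r.
have [c ct ->] := second_difference_mvt hg (ltW t0) hO.
have rem w : `|w| <= t * N -> `|g (x + w) - g x - 'd g x w| <= e' * (t * N).
  move=> hw; apply: le_trans (Hdel w (le_lt_trans hw tN_del)) _.
  by rewrite ler_pM2l.
have [h1 h2] := normr_segment_le u v ct.
have hrem := normr_dotv_remainder_le u (rem _ h1) (rem _ h2).
rewrite addrA addrK linearZ in hrem.
have -> : t * dotv (g (x + t *: v + c *: u) - g (x + c *: u)) u - t ^+ 2 * dotv ('d g x v) u
    = t * dotv (g (x + t *: v + c *: u) - g (x + c *: u) - t *: 'd g x v) u.
  by rewrite [in RHS]dotvBl dotvZl; ring.
rewrite normrM gtr0_norm //; apply: le_trans (ler_wpM2l (ltW t0) hrem) _.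
apply: le_trans (_ : _ <= 2 * d%:R * N ^+ 2 * e' * t ^+ 2) _.
  have -> : 2 * d%:R * N ^+ 2 * e' * t ^+ 2 = t * (2 * d%:R * (e' * (t * N)) * N) by ring.
  apply: ler_wpM2l; first exact: ltW.
  apply: ler_wpM2l; last by rewrite /N lerDl.
  by rewrite !mulr_ge0 ?ler0n // ltW.
by apply: ler_wpM2r; rewrite ?sqr_ge0.
Qed.

End SecondDifference.

Section Hessian.
Context {R : realType} {d : nat}.
Notation V := 'rV[R]_d.
Variables (f : V -> R) (g : V -> V) (O : set V).
Hypotheses (oO : open O) (hg : is_gradient_on O f g).

Lemma hessian_sym x u v : O x -> differentiable g x ->
  dotv ('d g x v) u = dotv ('d g x u) v.
Proof.
move=> Ox dg; apply/eqP; rewrite -subr_eq0 -normr_le0.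
apply/ler_addgt0Pr => e e0; rewrite add0r.
have e20 : 0 < e / 2 by rewrite divr_gt0.
have [T1 T10 H1] := second_difference_approx u v oO hg Ox dg e20.
have [T2 T20 H2] := second_difference_approx v u oO hg Ox dg e20.
have [t t0 [tT1 tT2]] := exists_pos_lt_both T10 T20.
have t2 : 0 < t ^+ 2 by rewrite exprn_gt0.
rewrite -(ler_pM2l t2) -[X in X * _ <= _](gtr0_norm t2) -normrM.
have := lerD (H1 t t0 tT1) (H2 t t0 tT2); rewrite second_differenceC.
set D := second_difference f x v u t => hD.
have -> : t ^+ 2 * (dotv ('d g x v) u - dotv ('d g x u) v) =
  (D - t ^+ 2 * dotv ('d g x u) v) - (D - t ^+ 2 * dotv ('d g x v) u) by ring.
apply: le_trans (ler_normB _ _) _; lra.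
Qed.

Lemma second_difference_diag_ge0 x v t :
  convex_fun_on O f -> O x -> O (x + t *: v) -> O (x + t *: v + t *: v) ->
  0 <= second_difference f x v v t.
Proof.
move=> cf Ox O1 O2.
have h2 : 0 <= (2 : R)^-1 <= 1 by apply/andP; split; lra.
have := cf _ _ _ Ox O2 h2.
have -> : (1 - 2^-1) *: x + 2^-1 *: (x + t *: v + t *: v) = x + t *: v.
  by apply/rowP => k; rewrite !mxE; field.
move=> /(_ O1); rewrite /second_difference.
have -> : 1 - 2^-1 = 2^-1 :> R by field.
lra.
Qed.

Lemma hessian_psd x v : convex_fun_on O f -> O x -> differentiable g x ->
  0 <= dotv ('d g x v) v.
Proof.
move=> cf Ox dg; apply/ler_addgt0Pl => e e0.
have [T T0 HT] := second_difference_approx v v oO hg Ox dg e0.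
have [r r0 Or] := open_norm_ball oO Ox.
have rv0 : 0 < r / (2 * (`|v| + 1)) by rewrite divr_gt0 ?mulr_gt0 ?ltr_wpDl.
have [t t0 [tT tr]] := exists_pos_lt_both T0 rv0.
have t2r : 2 * t * `|v| < r.
  by move: tr; rewrite ltr_pdivlMr ?mulr_gt0 ?ltr_wpDl //; lra.
have O1 : O (x + t *: v).
  apply: Or; rewrite normrZ gtr0_norm //.
  by have := mulr_ge0 (ltW t0) (normr_ge0 v); lra.
have O2 : O (x + t *: v + t *: v).
  by rewrite -addrA -scalerDl; apply: Or; rewrite normrZ gtr0_norm ?addr_gt0 //; lra.
have D0 := second_difference_diag_ge0 cf Ox O1 O2.
move: (HT t t0 tT); rewrite ler_norml => /andP[_ hT].
have t2 : 0 < t ^+ 2 by rewrite exprn_gt0.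
rewrite -(pmulr_rge0 _ t2) mulrDr; lra.
Qed.

End Hessian.

Lemma sqr_le_of_quadratic_ge0 (R : realFieldType) (a b c : R) : 0 <= c ->
  (forall l, 0 <= a + 2 * l * b + l ^+ 2 * c) -> b ^+ 2 <= a * c.
Proof.
move=> c0 hq; have a0 : 0 <= a by have := hq 0; rewrite !(mul0r, mulr0, expr0n) /= !addr0.
have [c_0 | c_gt0] := eqVneq c 0.
  have [-> | b_neq0] := eqVneq b 0; first by rewrite expr0n mulr_ge0.
  have := hq (- (a + 1) / (2 * b)); rewrite c_0 mulr0 addr0.
  have -> : 2 * (- (a + 1) / (2 * b)) * b = - (a + 1) by field.
  lra.
have cp : 0 < c by rewrite lt_neqAle eq_sym c_gt0.
have := hq (- b / c).
have -> : a + 2 * (- b / c) * b + (- b / c) ^+ 2 * c = a - b ^+ 2 / c by field.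
by rewrite subr_ge0 ler_pdivrMr.
Qed.

Section GradientLipschitz.
Context {R : realType} {d : nat}.
Notation V := 'rV[R]_d.

Lemma dotv_cauchy_schwarz_psd (H : {linear V -> V}) u w :
  (forall z, 0 <= dotv (H z) z) -> dotv (H u) w = dotv (H w) u ->
  dotv (H u) w ^+ 2 <= dotv (H u) u * dotv (H w) w.
Proof.
move=> psd sym; apply: sqr_le_of_quadratic_ge0 => [|l]; first exact: psd.
have := psd (u + l *: w).
rewrite linearD linearZ !dotvDl !dotvDr !dotvZl !dotvZr -sym.
by congr (_ <= _); ring.
Qed.

Lemma dotv_mean_value (g : V -> V) (K : set V) a b w :
  convex_in K -> (forall x, K x -> differentiable g x) -> K a -> K b ->
  exists2 z, K z & dotv (g a - g b) w = dotv ('d g z (a - b)) w.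
Proof.
move=> cK dg Ka Kb.
have Kseg (s : R) : 0 <= s <= 1 -> K (b + s *: (a - b)).
  move=> hs; have := cK b a s Kb Ka hs.
  by have -> : (1 - s) *: b + s *: a = b + s *: (a - b)
    by apply/rowP => k; rewrite !mxE; ring.
pose phi s := dotv (g (b + s *: (a - b))) w.
have hd (s : R) : 0 <= s <= 1 -> is_derive s 1 phi (dotv ('d g (b + s *: (a - b)) (a - b)) w).
  by move=> /Kseg /dg hs; apply: is_derive_dotv; apply: is_derive_line.
have [c /Kseg Kc e] := MVT_segment_derive ler01 hd.
exists (b + c *: (a - b)) => //; move: e; rewrite /phi scale1r scale0r addr0 subr0 mulr1.
by rewrite [b + _]addrC subrK dotvBl.
Qed.

Lemma gradient_lipschitz (f : V -> R) (g : V -> V) (O K : set V) (L : R) a b :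
  open O -> K `<=` O -> convex_in K -> is_gradient_on O f g -> convex_fun_on O f ->
  (forall x, O x -> differentiable g x) ->
  (forall x w, K x -> dotv ('d g x w) w <= L * sqn w) ->
  K a -> K b -> sqn (g a - g b) <= L ^+ 2 * sqn (a - b).
Proof.
move=> oO KO cK hg cf dg hL Ka Kb.
set w := g a - g b; set u := a - b.
have [z Kz hw] := dotv_mean_value w cK (fun x Kx => dg x (KO x Kx)) Ka Kb.
have Oz := KO z Kz.
have psd y : 0 <= dotv ('d g z y) y := hessian_psd oO hg y cf Oz (dg z Oz).
have := dotv_cauchy_schwarz_psd psd (hessian_sym oO hg w u Oz (dg z Oz)).
rewrite -hw => cs.
have {}cs : sqn w ^+ 2 <= (L * sqn u) * (L * sqn w).
  by apply: le_trans cs _; apply: ler_pM; rewrite ?psd ?hL.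
have [-> | w_neq0] := eqVneq (sqn w) 0; first by rewrite mulr_ge0 ?sqr_ge0 ?sqn_ge0.
have w_gt0 : 0 < sqn w by rewrite lt_neqAle eq_sym w_neq0 sqn_ge0.
rewrite -(ler_pM2r w_gt0) -expr2.
by have -> : L ^+ 2 * sqn u * sqn w = L * sqn u * (L * sqn w) by ring.
Qed.

End GradientLipschitz.

Section PairwiseSums.
Variables (R : realFieldType) (m : nat).
Implicit Types p : 'I_m -> R.

Lemma sum_pairwise_sqr_diff p :
  \sum_(i < m) \sum_(j < m) (p i - p j) ^+ 2 =
  2 * m%:R * \sum_(i < m) p i ^+ 2 - 2 * (\sum_(i < m) p i) ^+ 2.
Proof.
set S := \sum_(i < m) p i; set S2 := \sum_(i < m) p i ^+ 2.
have inner i : \sum_(j < m) (p i - p j) ^+ 2 = m%:R * p i ^+ 2 + S2 - 2 * p i * S.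
  have -> : \sum_(j < m) (p i - p j) ^+ 2 =
      \sum_(j < m) (p i ^+ 2 + p j ^+ 2 - 2 * p i * p j).
    by apply: eq_bigr => j _; ring.
  by rewrite sumrB big_split /= sumr_const card_ord -mulr_sumr -/S -/S2 -[_ *+ m]mulr_natl.
under eq_bigr do rewrite inner.
rewrite sumrB big_split /= sumr_const card_ord -mulr_suml -!mulr_sumr -/S -/S2.
by rewrite -[S2 *+ m]mulr_natl; ring.
Qed.

Lemma sqr_sum_le p : (\sum_(i < m) p i) ^+ 2 <= m%:R * \sum_(i < m) p i ^+ 2.
Proof.
have : 0 <= \sum_(i < m) \sum_(j < m) (p i - p j) ^+ 2.
  by apply: sumr_ge0 => i _; apply: sumr_ge0 => j _; apply: sqr_ge0.
rewrite sum_pairwise_sqr_diff; lra.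
Qed.

Lemma sum_sqr_centered p : (0 < m)%N ->
  \sum_(i < m) (p i - m%:R^-1 * \sum_(j < m) p j) ^+ 2 =
  \sum_(i < m) p i ^+ 2 - m%:R^-1 * (\sum_(i < m) p i) ^+ 2.
Proof.
move=> m0; set S := \sum_(j < m) p j.
have m_neq0 : m%:R != 0 :> R by rewrite pnatr_eq0 -lt0n.
have -> : \sum_(i < m) (p i - m%:R^-1 * S) ^+ 2 =
    \sum_(i < m) (p i ^+ 2 - 2 * m%:R^-1 * S * p i + m%:R^-2 * S ^+ 2).
  by apply: eq_bigr => i _; rewrite expr2; field.
rewrite big_split sumrB /= sumr_const card_ord -mulr_sumr -/S -mulr_natl.
by field.
Qed.

End PairwiseSums.

Section Consensus.
Context {R : realType} {d : nat}.
Notation V := 'rV[R]_d.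

Lemma avgvE m (z : 'I_m -> V) k : avgv z ord0 k = m%:R^-1 * \sum_(j < m) z j ord0 k.
Proof. by rewrite mxE summxE. Qed.

Lemma sqn_avgv_le m (z : 'I_m -> V) : (0 < m)%N ->
  sqn (avgv z) <= m%:R^-1 * \sum_(j < m) sqn (z j).
Proof.
move=> m0; have m_gt0 : 0 < m%:R :> R by rewrite ltr0n.
rewrite sqnE; under eq_bigr do rewrite avgvE.
under [X in _ <= _ * X]eq_bigr do rewrite sqnE.
rewrite exchange_big mulr_sumr; apply: ler_sum => k _ /=.
rewrite exprMn expr2 -mulrA ler_pM2l ?invr_gt0 //.
by rewrite mulrC ler_pdivrMr // mulrC sqr_sum_le.
Qed.

Lemma sum_pairwise_sqn_diff m (z : 'I_m -> V) : (0 < m)%N ->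
  \sum_(i < m) \sum_(j < m) sqn (z i - z j) = 2 * m%:R * sqn_perp z.
Proof.
move=> m0; have m_neq0 : m%:R != 0 :> R by rewrite pnatr_eq0 -lt0n.
under eq_bigr do under eq_bigr do rewrite sqnE.
under [X in _ = _ * X]eq_bigr do rewrite sqnE.
under eq_bigr do rewrite exchange_big /=.
rewrite exchange_big /= [in RHS]exchange_big mulr_sumr; apply: eq_bigr => k _.
under eq_bigr do under eq_bigr do rewrite !mxE.
under [X in _ = _ * X]eq_bigr do rewrite !mxE summxE.
by rewrite sum_pairwise_sqr_diff sum_sqr_centered //; field.
Qed.

Lemma convex_in_combination (K : set V) n (w : 'I_n -> R) (z : 'I_n -> V) :
  convex_in K -> (forall j, 0 <= w j) -> \sum_(j < n) w j = 1 ->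
  (forall j, K (z j)) -> K (\sum_(j < n) w j *: z j).
Proof.
move=> cK; elim: n w z => [|n IH] w z w0 w1 Kz.
  by move: w1; rewrite big_ord0 => /eqP; rewrite eq_sym oner_eq0.
rewrite big_ord_recr /=; rewrite big_ord_recr /= in w1.
set s := \sum_(i < n) w (widen_ord (leqnSn n) i) in w1 *.
have s0 : 0 <= s by rewrite sumr_ge0.
have [s_0 | s_neq0] := eqVneq s 0.
  have -> : w ord_max = 1 by lra.
  rewrite big1 ?add0r ?scale1r // => i _.
  by rewrite (psumr_eq0P _ s_0) ?scale0r.
pose w' i := w (widen_ord (leqnSn n) i) / s.
have -> : \sum_(i < n) w (widen_ord (leqnSn n) i) *: z (widen_ord (leqnSn n) i) =
    s *: \sum_(i < n) w' i *: z (widen_ord (leqnSn n) i).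
  by rewrite scaler_sumr; apply: eq_bigr => i _; rewrite scalerA mulrC divfK.
rewrite (_ : s = 1 - w ord_max); last by lra.
apply: cK => //; last by rewrite w0 /=; lra.
apply: IH => [i | | i]; [by rewrite divr_ge0 | by rewrite -mulr_suml divff | exact: Kz].
Qed.

Lemma sqn_tracking_error_le m (gf : 'I_m -> V -> V) (X Y : 'I_m -> V) (Lc : R) :
  (0 < m)%N ->
  (forall j i k, sqn (gf j (X i) - gf j (X k)) <= Lc ^+ 2 * sqn (X i - X k)) ->
  \sum_(i < m) Y i = \sum_(i < m) gf i (X i) ->
  \sum_(i < m) sqn (gradF gf (X i) - Y i) <= 4 * Lc ^+ 2 * sqn_perp X + 2 * sqn_perp Y.
Proof.
move=> m0 lip track; have m_gt0 : 0 < m%:R :> R by rewrite ltr0n.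
pose a i := avgv (fun j => gf j (X i) - gf j (X j)).
have split_err i : gradF gf (X i) - Y i = a i + (avgv Y - Y i).
  by rewrite /a /avgv track /gradF sumrB scalerBr addrA subrK.
have a_le : \sum_(i < m) sqn (a i) <= 2 * Lc ^+ 2 * sqn_perp X.
  apply: le_trans (_ : _ <= \sum_(i < m) (m%:R^-1 * \sum_(j < m) Lc ^+ 2 * sqn (X i - X j))) _.
    apply: ler_sum => i _; apply: le_trans (sqn_avgv_le _ m0) _.
    by rewrite ler_pM2l ?invr_gt0 //; apply: ler_sum => j _; apply: lip.
  rewrite -mulr_sumr; under eq_bigr do rewrite -mulr_sumr.
  rewrite -mulr_sumr sum_pairwise_sqn_diff //.
  have -> : m%:R^-1 * (Lc ^+ 2 * (2 * m%:R * sqn_perp X)) = 2 * Lc ^+ 2 * sqn_perp X.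
    by field; rewrite gt_eqF.
  exact: lexx.
have Y_perp : \sum_(i < m) sqn (avgv Y - Y i) = sqn_perp Y.
  by apply: eq_bigr => i _; rewrite -opprB sqnN.
apply: le_trans (_ : _ <= \sum_(i < m) (2 * sqn (a i) + 2 * sqn (avgv Y - Y i))) _.
  by apply: ler_sum => i _; rewrite split_err sqnD_le.
by rewrite big_split /= -!mulr_sumr Y_perp; lra.
Qed.

End Consensus.

Section Sonata.
Context {R : realType} {d m : nat}.
Notation V := 'rV[R]_d.
Variables (W : 'M[R]_m) (alpha : R) (x xh y : nat -> 'I_m -> V) (gf : 'I_m -> V -> V).

Lemma sonata_iterates_in (K : set V) :
  convex_in K -> 0 <= alpha <= 1 ->
  (forall i j, 0 <= W i j) -> (forall i, \sum_(j < m) W i j = 1) ->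
  (forall i, K (x 0%N i)) -> (forall n i, K (xh n i)) ->
  (forall n i, x n.+1 i = \sum_(j < m) W i j *: (x n j + alpha *: (xh n j - x n j))) ->
  forall n i, K (x n i).
Proof.
move=> cK alpha01 W0 W1 Kx0 Kxh hx; elim=> [|n IH] i //.
rewrite hx; apply: convex_in_combination => // j.
have -> : x n j + alpha *: (xh n j - x n j) = (1 - alpha) *: x n j + alpha *: xh n j.
  by apply/rowP => k; rewrite !mxE; ring.
exact: cK.
Qed.

Lemma sonata_tracking :
  (forall j, \sum_(i < m) W i j = 1) -> (forall i, y 0%N i = gf i (x 0%N i)) ->
  (forall n i, y n.+1 i = \sum_(j < m) W i j *: (y n j + gf j (x n.+1 j) - gf j (x n j))) ->
  forall n, \sum_(i < m) y n i = \sum_(i < m) gf i (x n i).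
Proof.
move=> W1 y0 hy; elim=> [|n IH]; first by apply: eq_bigr => i _.
under eq_bigr do rewrite hy.
rewrite exchange_big /=; under eq_bigr do rewrite -scaler_suml W1 scale1r.
by rewrite sumrB big_split /= IH addrAC subrr add0r.
Qed.

End Sonata.

Theorem lemma3p3
  (R : realType) (d m : nat)
  (* problem data *)
  (K O : set 'rV[R]_d)
  (f : 'I_m -> 'rV[R]_d -> R) (gf : 'I_m -> 'rV[R]_d -> 'rV[R]_d)
  (G : 'rV[R]_d -> R) (mu L : R) (Li : 'I_m -> R) (Lmax : R)
  (* network *)
  (E : rel 'I_m) (W : 'M[R]_m)
  (* surrogates f~_i(. ; .) and their gradients in the first argument *)
  (ft : 'I_m -> 'rV[R]_d -> 'rV[R]_d -> R)
  (gft : 'I_m -> 'rV[R]_d -> 'rV[R]_d -> 'rV[R]_d)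
  (* algorithm *)
  (alpha : R) (x xh y : nat -> 'I_m -> 'rV[R]_d) :
  (* Assumption (A) *)
  (0 < m)%N ->
  K !=set0 -> closed K -> convex_in K ->
  open O -> K `<=` O ->
  (forall i, is_gradient_on O (f i) (gf i)) ->
  (forall i x0, O x0 -> differentiable (gf i) x0) ->
  (forall i, convex_fun_on O (f i)) ->
  0 < mu ->
  (forall x0 v, K x0 ->
     mu * sqn v <= dotv ('d (gradF gf) x0 v) v <= L * sqn v) ->
  convex_fun_on K G ->
  (forall i x0 v, K x0 -> dotv ('d (gf i) x0 v) v <= Li i * sqn v) ->
  (forall i, Li i <= Lmax) -> (exists i, Lmax = Li i) ->
  (* Assumption (B) *)
  (forall i j, E i j = E j i) -> (forall i, ~~ E i i) ->
  (forall i j, connect E i j) ->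
  (* Assumption (W) *)
  (forall i, 0 < W i i) ->
  (forall i j, i != j -> (0 < W i j <-> E i j)) ->
  (forall i j, i != j -> ~~ E i j -> W i j = 0) ->
  (forall i j, 0 <= W i j) ->
  (forall i, \sum_(j < m) W i j = 1) ->
  (forall j, \sum_(i < m) W i j = 1) ->
  (* Assumption (C) *)
  (forall i, C2_on [set p : 'rV[R]_d * 'rV[R]_d | O p.1 /\ O p.2]
                   (fun p => ft i p.1 p.2)) ->
  (forall i z, O z -> is_gradient_on O (fun u => ft i u z) (fun u => gft i u z)) ->
  (forall i x0, O x0 -> gft i x0 x0 = gf i x0) ->
  (forall i z, K z -> euclid_lipschitz_on K (fun u => gft i u z)) ->
  (forall i z, K z -> strongly_convex_on K (fun u => ft i u z)) ->
  (* SONATA *)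
  0 < alpha <= 1 ->
  (forall i, K (x 0%N i)) ->
  (forall i, y 0%N i = gf i (x 0%N i)) ->
  (forall n i, K (xh n i) /\
     forall z, K z ->
       ft i (xh n i) (x n i) + dotv (y n i - gf i (x n i)) (xh n i - x n i) + G (xh n i)
       <= ft i z (x n i) + dotv (y n i - gf i (x n i)) (z - x n i) + G z) ->
  (forall n i, x n.+1 i =
     \sum_(j < m) W i j *: (x n j + alpha *: (xh n j - x n j))) ->
  (forall n i, y n.+1 i =
     \sum_(j < m) W i j *: (y n j + gf j (x n.+1 j) - gf j (x n j))) ->
  (* conclusion *)
  forall n : nat,
    \sum_(i < m) sqn (gradF gf (x n i) - y n i)
      <= 4 * Lmax ^+ 2 * sqn_perp (x n) + 2 * sqn_perp (y n).
Proof.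
move=> m0 _ _ cK oO KO hgf dgf cvf _ _ _ hLi LiLmax _ _ _ _ _ _ _ W0 W1 W1' _ _ _ _ _
  alpha01 Kx0 y0 hxh hx hy n.
have alpha01' : 0 <= alpha <= 1 by case/andP: alpha01 => /ltW -> ->.
have xK := sonata_iterates_in cK alpha01' W0 W1 Kx0 (fun n i => (hxh n i).1) hx.
have hLmax j z w : K z -> dotv ('d (gf j) z w) w <= Lmax * sqn w.
  by move=> Kz; apply: le_trans (hLi j z w Kz) _; apply: ler_wpM2r; rewrite ?sqn_ge0.
apply: sqn_tracking_error_le m0 _ (sonata_tracking W1' y0 hy n) => j i k.
exact: gradient_lipschitz oO KO cK (hgf j) (cvf j) (dgf j) (hLmax j) (xK n i) (xK n k).
Qed.
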